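(* Let $\rho_\chi(p,\pi/8)=p|\Psi_s\rangle\langle\Psi_s|+(1-p)\,|00\rangle\langle00|\otimes\tfrac{I_2}{2}$ with $|\Psi_s\rangle=\cos\frac{\pi}{8}|000\rangle+\sin\frac{\pi}{8}|111\rangle$. For diagonal filters $F_A=\mathrm{diag}(x,1)$, $F_B=\mathrm{diag}(y,1)$, $F_C=\mathrm{diag}(z,1)$ with $x,y,z>0$, let $\rho'=\frac1N(F_A\otimes F_B\otimes F_C)\rho_\chi(p,\pi/8)(F_A\otimes F_B\otimes F_C)^\dagger$, where $$N=\tfrac{2-\sqrt2}{4}p+\tfrac{1-p}{2}x^2y^2+\tfrac{2+\sqrt2 p}{4}x^2y^2z^2 .$$ Then the $3\times 9$ matrix $M'_{j,ik}=\mathrm{tr}[\rho'(\sigma_i\otimes\sigma_j\otimes\sigma_k)]$ has singular values $\frac{pxyz}{N},\frac{pxyz}{N},\frac{|D|}{N}$ with $D=-\tfrac{2-\sqrt2}{4}p-\tfrac{1-p}{2}x^2y^2+\tfrac{2+\sqrt2p}{4}x^2y^2z^2$; whenever $pxyz>|D|$, the maximum of $|\mathrm{tr}(\mathcal{S}\rho')|$ over Svetlichny operators equals $4pxyz/N$. Moreover, for every $p\in[0.3697,1]$ there exist $x,y,z>0$ such that $\rho'$ violates the Svetlichny inequality, i.e. $\max_{\mathcal{S}}|\mathrm{tr}(\mathcal{S}\rho')|>4$.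
   Context: $\sigma_1,\sigma_2,\sigma_3$ are the Pauli matrices, $I_2$ the $2\times2$ identity. For real unit vectors $\vec a,\vec a',\vec b,\vec b',\vec c,\vec c'\in\mathbb{R}^3$ let $A=\vec a\cdot\vec\sigma=\sum_k a_k\sigma_k$, and similarly $A',B,B',C,C'$. The Svetlichny operator is $$\mathcal{S}=A\otimes[(B+B')\otimes C+(B-B')\otimes C']+A'\otimes[(B-B')\otimes C-(B+B')\otimes C'],$$ and maxima are over all choices of the six unit vectors. A state violates the Svetlichny inequality if $|\mathrm{tr}(\mathcal{S}\rho)|>4$ for some such choice. *)

From HB Require Import structures.
From mathcomp Require Import all_boot all_order all_algebra.
From mathcomp Require Import all_classical all_reals all_analysis.
From mathcomp Require Import complex mxtens.

Set Implicit Arguments.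
Unset Strict Implicit.
Unset Printing Implicit Defensive.

Import Order.TTheory GRing.Theory Num.Theory.
Local Open Scope ring_scope.
Local Open Scope complex_scope.

Section Svetlichny.
Variable R : realType.
Local Notation C := (R[i]).

(* Pauli matrices sigma_1, sigma_2, sigma_3 (indexed by 'I_3 = {0,1,2}) *)
Definition pauli (k : 'I_3) : 'M[C]_2 :=
  \matrix_(r < 2, s < 2)
    match nat_of_ord k, nat_of_ord r, nat_of_ord s with
    | 0%N, 0%N, 1%N => 1
    | 0%N, 1%N, 0%N => 1
    | 1%N, 0%N, 1%N => - 'i
    | 1%N, 1%N, 0%N => 'i
    | 2%N, 0%N, 0%N => 1
    | 2%N, 1%N, 1%N => -1
    | _, _, _ => 0
    end.

Definition dagger m n (A : 'M[C]_(m, n)) : 'M[C]_(n, m) := (map_mx conjc A)^T.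

Definition unit3 (a : 'rV[R]_3) : Prop := \sum_(k < 3) a 0 k ^+ 2 = 1.
Definition dotsig (a : 'rV[R]_3) : 'M[C]_2 := \sum_(k < 3) (a 0 k)%:C *: pauli k.

Definition svetlichny (a a' b b' c c' : 'rV[R]_3) : 'M[C]_(2 * (2 * 2)) :=
  let A := dotsig a in let A' := dotsig a' in
  let B := dotsig b in let B' := dotsig b' in
  let Cc := dotsig c in let Cc' := dotsig c' in
  A *t ((B + B') *t Cc + (B - B') *t Cc') + A' *t ((B - B') *t Cc - (B + B') *t Cc').

Definition svet_val (rho : 'M[C]_(2 * (2 * 2))) (a a' b b' c c' : 'rV[R]_3) : R :=
  ComplexField.Normc.normc (\tr (svetlichny a a' b b' c c' *m rho)).

Definition is_max_svet (rho : 'M[C]_(2 * (2 * 2))) (v : R) : Prop :=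
  (forall a a' b b' c c', unit3 a -> unit3 a' -> unit3 b -> unit3 b' ->
      unit3 c -> unit3 c' -> svet_val rho a a' b b' c c' <= v) /\
  (exists a a' b b' c c', (unit3 a /\ unit3 a' /\ unit3 b /\ unit3 b' /\ unit3 c /\ unit3 c') /\ svet_val rho a a' b b' c c' = v).

Definition violates_svet (rho : 'M[C]_(2 * (2 * 2))) : Prop :=
  exists a a' b b' c c', (unit3 a /\ unit3 a' /\ unit3 b /\ unit3 b' /\ unit3 c /\ unit3 c') /\ 4 < svet_val rho a a' b b' c c'.

Definition ket0 : 'cV[C]_2 := delta_mx 0 0.
Definition ket1 : 'cV[C]_2 := delta_mx 1 0.

Definition psi_s : 'cV[C]_(2 * (2 * 2)) :=
  (cos (pi / 8))%:C *: (ket0 *t (ket0 *t ket0))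
  + (sin (pi / 8))%:C *: (ket1 *t (ket1 *t ket1)).

Definition rho_chi (p : R) : 'M[C]_(2 * (2 * 2)) :=
  p%:C *: (psi_s *m dagger psi_s)
  + (1 - p)%:C *:
      (((ket0 *t ket0) *m dagger (ket0 *t ket0)) *t ((2%:R : C)^-1 *: 1%:M)
        : 'M[C]_((2 * 2) * 2)).

Definition filt (x : R) : 'M[C]_2 := diag_mx (\row_(i < 2) if i == 0 then x%:C else 1).

Definition Nf (p x y z : R) : R :=
  (2 - Num.sqrt 2) / 4 * p + (1 - p) / 2 * (x ^+ 2 * y ^+ 2)
  + (2 + Num.sqrt 2 * p) / 4 * (x ^+ 2 * y ^+ 2 * z ^+ 2).

Definition Df (p x y z : R) : R :=
  - ((2 - Num.sqrt 2) / 4 * p) - (1 - p) / 2 * (x ^+ 2 * y ^+ 2)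
  + (2 + Num.sqrt 2 * p) / 4 * (x ^+ 2 * y ^+ 2 * z ^+ 2).

Definition rho_f (p x y z : R) : 'M[C]_(2 * (2 * 2)) :=
  let F := filt x *t (filt y *t filt z) in
  (Nf p x y z)^-1%:C *: (F *m rho_chi p *m dagger F).

(* correlation matrix M_{j, ik} = tr[rho (sigma_i (x) sigma_j (x) sigma_k)];
   the column index c : 'I_(3*3) encodes the pair (i, k) as 3 i + k *)
Definition corr_mx (rho : 'M[C]_(2 * (2 * 2))) : 'M[C]_(3, 3 * 3) :=
  \matrix_(j < 3, c < 3 * 3)
    let ik := mxtens_unindex c in
    \tr (rho *m (pauli ik.1 *t (pauli j *t pauli ik.2))).

(* s is the list (multiset) of singular values of M (m <= n): the nonnegative
   square roots of the eigenvalues of M M^dagger, counted with multiplicity *)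
Definition singular_values_are m n (M : 'M[C]_(m, n)) (s : seq R) : Prop :=
  [/\ size s = m, all (fun t => 0 <= t) s
    & char_poly (M *m dagger M) = \prod_(t <- s) ('X - ((t ^+ 2)%:C)%:P)].

End Svetlichny.

(* The filtered state rho' is real and supported on |000>, |001>, |111>, so its
   correlation tensor has only the entries T_xxx = -T_xyy = -T_yxy = -T_yyx = k and
   T_zzz = d, with k = (pxyz/N)/sqrt 2 and d = D/N.  The rows of the 3 x 9 matrix M'
   are then orthogonal with squared norms 2k^2, 2k^2, d^2, which gives the singular
   values.  Expanding the Svetlichny operator in the Pauli basis gives
   tr(S rho') = (b + b').M'u + (b - b').M'v with u = a(x)c - a'(x)c' and
   v = a(x)c' + a'(x)c, where |u|^2 + |v|^2 = |b + b'|^2 + |b - b'|^2 = 4; two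
   Cauchy-Schwarz steps bound it by 4 s_max = 4pxyz/N when pxyz > |D|, and a choice
   of measurements in the xy-plane attains this bound.  For the violation, the
   z maximising pxyz - N for fixed xy leaves
   pxyz - N = p^2/(2 + sqrt 2 p) - (2 - sqrt 2)p/4 - (1 - p)(xy)^2/2, which is
   positive for small xy as soon as p > (2 - sqrt 2)/(3 - sqrt 2) ~ 0.36940. *)

From HB Require Import structures.
From mathcomp Require Import all_boot all_order all_algebra.
From mathcomp Require Import all_classical all_reals all_analysis.
From mathcomp Require Import complex mxtens.
From mathcomp Require Import ring lra.

Set Implicit Arguments.
Unset Strict Implicit.
Unset Printing Implicit Defensive.

Import Order.TTheory GRing.Theory Num.Theory.
Local Open Scope ring_scope.

Lemma sum_mxtens_unindex (V : nmodType) m n (F : 'I_m -> 'I_n -> V) :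
  \sum_(t < m * n) F (mxtens_unindex t).1 (mxtens_unindex t).2
  = \sum_(i < m) \sum_(k < n) F i k.
Proof.
rewrite pair_big [RHS](reindex (@mxtens_unindex m n)) //=.
by exists (@mxtens_index m n) => t _; rewrite (mxtens_indexK, mxtens_unindexK).
Qed.

Lemma tensmxDr (K : pzRingType) m n p q (A : 'M[K]_(m, n)) (X Y : 'M[K]_(p, q)) :
  A *t (X + Y) = A *t X + A *t Y.
Proof. by apply/matrixP => i j; rewrite !mxE mulrDr. Qed.

Lemma tensmxNr (K : pzRingType) m n p q (A : 'M[K]_(m, n)) (X : 'M[K]_(p, q)) :
  A *t (- X) = - (A *t X).
Proof. by apply/matrixP => i j; rewrite !mxE mulrN. Qed.

Lemma tensmxZr (K : comPzRingType) m n p q (A : 'M[K]_(m, n)) a (X : 'M[K]_(p, q)) :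
  A *t (a *: X) = a *: (A *t X).
Proof. by apply/matrixP => i j; rewrite !mxE mulrCA. Qed.

Lemma row_tensE (K : pzRingType) m n (u : 'rV[K]_m) (v : 'rV[K]_n) t :
  (u *t v) 0 t = u 0 (mxtens_unindex t).1 * v 0 (mxtens_unindex t).2.
Proof.
rewrite mxE (ord1 (mxtens_unindex (0 : 'I_(1 * 1))).1).
by rewrite (ord1 (mxtens_unindex (0 : 'I_(1 * 1))).2).
Qed.

Lemma tens_diag_mx (K : pzRingType) m n (d1 : 'rV[K]_m) (d2 : 'rV[K]_n) :
  diag_mx d1 *t diag_mx d2 = diag_mx (d1 *t d2).
Proof.
apply/matrixP => i j; case: (mxtens_indexP i) => i1 i2; case: (mxtens_indexP j) => j1 j2.
rewrite tensmxE !(row_tensE, mxE) !mxtens_indexK (inj_eq (can_inj (@mxtens_indexK _ _))).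
rewrite xpair_eqE /=.
by case: (i1 == j1); case: (i2 == j2); rewrite ?mulr0n ?mulr1n ?mulr0 ?mul0r.
Qed.

Lemma tens_delta_mx (K : pzRingType) m n p q
    (i : 'I_m) (j : 'I_n) (k : 'I_p) (l : 'I_q) :
  delta_mx i j *t delta_mx k l
  = delta_mx (mxtens_index (i, k)) (mxtens_index (j, l)) :> 'M[K]_(_, _).
Proof.
apply/matrixP => r s; case: (mxtens_indexP r) => r1 r2; case: (mxtens_indexP s) => s1 s2.
rewrite tensmxE !mxE !(inj_eq (can_inj (@mxtens_indexK _ _))) !xpair_eqE.
by case: (r1 == i); case: (s1 == j); case: (r2 == k); case: (s2 == l);
  rewrite /= ?mulr1 ?mulr0 ?mul0r.
Qed.

Lemma mxtrace_delta_mul (K : comPzRingType) n (i j : 'I_n) (A : 'M[K]_n) :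
  \tr (delta_mx i j *m A) = A j i.
Proof.
rewrite -(mul_delta_mx (0 : 'I_1)) -mulmxA mxtrace_mulC -rowE -colE.
by rewrite /mxtrace big_ord1 !mxE.
Qed.

Lemma diag_delta_diag (K : comPzRingType) n (d : 'rV[K]_n) (i j : 'I_n) :
  diag_mx d *m delta_mx i j *m diag_mx d = (d 0 i * d 0 j) *: delta_mx i j.
Proof.
apply/matrixP => r s; rewrite mul_mx_diag mul_diag_mx !mxE.
by case: eqP => [->|]; case: eqP => [->|]; rewrite ?mulr1 ?mulr0 ?mul0r.
Qed.

Section RealRowVectors.
Variable R : realFieldType.

Definition sqnorm n (v : 'rV[R]_n) : R := \sum_i v 0 i ^+ 2.

Definition dotr n (v w : 'rV[R]_n) : R := \sum_i v 0 i * w 0 i.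

Lemma ler_dotr n (s : R) (v w : 'rV[R]_n) :
  0 < s -> 2 * s * `|dotr v w| <= s ^+ 2 * sqnorm v + sqnorm w.
Proof.
move=> s_gt0.
have expand e : \sum_i (s * v 0 i - e * w 0 i) ^+ 2
    = s ^+ 2 * sqnorm v - 2 * s * e * dotr v w + e ^+ 2 * sqnorm w.
  rewrite /sqnorm /dotr !mulr_sumr -sumrB -big_split /=.
  by apply: eq_bigr => i _; ring.
have sum_sqr_ge0 e : 0 <= \sum_i (s * v 0 i - e * w 0 i) ^+ 2.
  by apply: sumr_ge0 => i _; apply: sqr_ge0.
have := sum_sqr_ge0 1; have := sum_sqr_ge0 (-1); rewrite !expand.
have [d_ge0|d_lt0] := lerP 0 (dotr v w).
- by rewrite ger0_norm //; nra.
- by rewrite ltr0_norm //; nra.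
Qed.

Lemma sqnorm_add_sub n (b b' : 'rV[R]_n) :
  sqnorm (b + b') + sqnorm (b - b') = 2 * (sqnorm b + sqnorm b').
Proof.
rewrite /sqnorm -!big_split mulr_sumr /=.
by apply: eq_bigr => i _; rewrite !mxE; ring.
Qed.

(* The two vectors are the real and imaginary parts of (a + i a') (x) (c + i c'). *)
Lemma sqnorm_tens_re_im m n (a a' : 'rV[R]_m) (c c' : 'rV[R]_n) :
  sqnorm (a *t c - a' *t c') + sqnorm (a *t c' + a' *t c)
  = (sqnorm a + sqnorm a') * (sqnorm c + sqnorm c').
Proof.
rewrite /sqnorm -!big_split mulr_sum /=.
by apply: eq_bigr => t _; rewrite !(row_tensE, mxE); ring.
Qed.

Lemma svetlichny_bound m n (M : 'M[R]_(m, n)) (s : R)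
    (b1 b2 : 'rV[R]_m) (u v : 'rV[R]_n) :
  0 < s -> (forall w : 'rV[R]_n, sqnorm (w *m M^T) <= s ^+ 2 * sqnorm w) ->
  sqnorm b1 + sqnorm b2 = 4 -> sqnorm u + sqnorm v = 4 ->
  `|dotr b1 (u *m M^T) + dotr b2 (v *m M^T)| <= 4 * s.
Proof.
move=> s_gt0 M_le b_norm uv_norm.
have := ler_dotr b1 (u *m M^T) s_gt0; have := M_le u.
have := ler_dotr b2 (v *m M^T) s_gt0; have := M_le v.
have := ler_normD (dotr b1 (u *m M^T)) (dotr b2 (v *m M^T)).
nra.
Qed.

(* Column [t] encodes the pair of Pauli indices (i, k) as [t = 3 i + k]. *)
Definition xcorr (k d : R) : 'M[R]_(3, 3 * 3) :=
  \matrix_(j < 3, t < 3 * 3)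
    match nat_of_ord j, nat_of_ord t with
    | 0%N, 0%N => k | 0%N, 4%N => - k | 1%N, 1%N => - k | 1%N, 3%N => - k
    | 2%N, 8%N => d | _, _ => 0
    end.

Lemma sqnorm_xcorr_le (k d s : R) (w : 'rV[R]_(3 * 3)) :
  2 * k ^+ 2 = s ^+ 2 -> d ^+ 2 <= s ^+ 2 ->
  sqnorm (w *m (xcorr k d)^T) <= s ^+ 2 * sqnorm w.
Proof.
move=> k_s d_s.
rewrite /sqnorm !big_ord_recl !big_ord0 !mxE !big_ord_recl !big_ord0 !mxE /=.
rewrite !(mulr0, addr0, add0r).
set w0 := w 0 ord0.
set w1 := w 0 (lift ord0 ord0).
set w2 := w 0 (lift ord0 (lift ord0 ord0)).
set w3 := w 0 (lift ord0 (lift ord0 (lift ord0 ord0))).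
set w4 := w 0 (lift ord0 (lift ord0 (lift ord0 (lift ord0 ord0)))).
set w5 := w 0 (lift ord0 (lift ord0 (lift ord0 (lift ord0 (lift ord0 ord0))))).
set w6 := w 0 (lift ord0 (lift ord0 (lift ord0 (lift ord0 (lift ord0 (lift ord0 ord0)))))).
set w7 := w 0 (lift ord0 (lift ord0 (lift ord0 (lift ord0 (lift ord0 (lift ord0
  (lift ord0 ord0))))))).
set w8 := w 0 (lift ord0 (lift ord0 (lift ord0 (lift ord0 (lift ord0 (lift ord0
  (lift ord0 (lift ord0 ord0)))))))).
have k2 := sqr_ge0 k; have s2 := sqr_ge0 s.
have := mulr_ge0 k2 (sqr_ge0 (w0 + w4)); have := mulr_ge0 k2 (sqr_ge0 (w1 - w3)).
have := ler_wpM2r (sqr_ge0 w8) d_s.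
have := mulr_ge0 s2 (addr_ge0 (addr_ge0 (sqr_ge0 w2) (sqr_ge0 w5))
                              (addr_ge0 (sqr_ge0 w6) (sqr_ge0 w7))).
nra.
Qed.

Lemma xcorr_gram (k d : R) :
  xcorr k d *m (xcorr k d)^T =
  diag_mx (\row_(j < 3) if j == 2 :> nat then d ^+ 2 else 2 * k ^+ 2).
Proof.
apply/matrixP => i j; rewrite !mxE !big_ord_recl !big_ord0 !mxE.
by case: i => [[|[|[|//]]] ?]; case: j => [[|[|[|//]]] ?]; rewrite /= ?mulr0n ?mulr1n; ring.
Qed.

End RealRowVectors.

Section PauliCorrelations.
Local Open Scope complex_scope.
Variable R : realType.
Local Notation C := (R[i]).

Lemma dotsig3_tens (a b c : 'rV[R]_3) :
  dotsig a *t (dotsig b *t dotsig c) =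
  \sum_(i < 3) \sum_(j < 3) \sum_(k < 3)
     (a 0 i * b 0 j * c 0 k)%:C *: (pauli R i *t (pauli R j *t pauli R k)).
Proof.
apply/matrixP => r s; rewrite !mxE /dotsig !summxE [X in _ * X]mulr_suml mulr_suml.
apply: eq_bigr => i _; rewrite summxE mulr_sumr; apply: eq_bigr => j _.
rewrite summxE !mulr_sumr; apply: eq_bigr => k _.
by rewrite !mxE !rmorphM /=; ring.
Qed.

Lemma trace_dotsig3 (rho : 'M[C]_(2 * (2 * 2))) (a b c : 'rV[R]_3) :
  \tr ((dotsig a *t (dotsig b *t dotsig c)) *m rho) =
  \sum_(j < 3) \sum_(t < 3 * 3) (b 0 j * (a *t c) 0 t)%:C * corr_mx rho j t.
Proof.
rewrite mxtrace_mulC dotsig3_tens mulmx_sumr linear_sum /=.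
under eq_bigr => i _ do rewrite mulmx_sumr linear_sum /=.
under eq_bigr => i _ do under eq_bigr => j _ do rewrite mulmx_sumr linear_sum /=.
under eq_bigr => i _ do under eq_bigr => j _ do under eq_bigr => k _ do
  rewrite -scalemxAr linearZ /=.
rewrite exchange_big; apply: eq_bigr => j _; rewrite -sum_mxtens_unindex.
by apply: eq_bigr => t _; rewrite !(row_tensE, mxE) /= mulrCA mulrA.
Qed.

Lemma dotsigD (b b' : 'rV[R]_3) : dotsig (b + b') = dotsig b + dotsig b'.
Proof.
by rewrite /dotsig -big_split; apply: eq_bigr => k _; rewrite mxE rmorphD scalerDl.
Qed.

Lemma dotsigB (b b' : 'rV[R]_3) : dotsig (b - b') = dotsig b - dotsig b'.
Proof.
by rewrite /dotsig -sumrB; apply: eq_bigr => k _; rewrite !mxE rmorphB scalerBl.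
Qed.

Lemma trace_svetlichny (rho : 'M[C]_(2 * (2 * 2))) (a a' b b' c c' : 'rV[R]_3) :
  \tr (svetlichny a a' b b' c c' *m rho) =
  \sum_(j < 3) \sum_(t < 3 * 3)
     ((b + b') 0 j * (a *t c - a' *t c') 0 t
      + (b - b') 0 j * (a *t c' + a' *t c) 0 t)%:C * corr_mx rho j t.
Proof.
rewrite /svetlichny /= -dotsigD -dotsigB !tensmxDr tensmxNr.
rewrite !mulmxDl mulNmx !mxtraceD raddfN /= !trace_dotsig3.
rewrite -!sumrB -!big_split /=; apply: eq_bigr => j _.
rewrite -!sumrB -!big_split /=; apply: eq_bigr => t _.
rewrite -mulrBl -!mulrDl -rmorphB -!rmorphD !mxE /=; congr (_%:C * _); ring.
Qed.

Lemma normc_real (v : R) : ComplexField.Normc.normc (v%:C : C) = `|v|.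
Proof. by rewrite /ComplexField.Normc.normc /= expr0n /= addr0 sqrtr_sqr. Qed.

Lemma svet_val_real_corr (rho : 'M[C]_(2 * (2 * 2))) (M : 'M[R]_(3, 3 * 3))
    (a a' b b' c c' : 'rV[R]_3) :
  corr_mx rho = map_mx (real_complex R) M ->
  svet_val rho a a' b b' c c' =
  `|dotr (b + b') ((a *t c - a' *t c') *m M^T) + dotr (b - b') ((a *t c' + a' *t c) *m M^T)|.
Proof.
move=> corrE; rewrite /svet_val trace_svetlichny corrE -normc_real; congr ComplexField.Normc.normc.
rewrite /dotr rmorphD !rmorph_sum -big_split /=; apply: eq_bigr => j _.
rewrite !mxE !mulr_sumr -rmorphD -big_split rmorph_sum; apply: eq_bigr => t _.
by rewrite !mxE -rmorphM /=; congr (_ %:C); ring.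
Qed.

Lemma dagger_real m n (A : 'M[R]_(m, n)) :
  dagger (map_mx (real_complex R) A) = map_mx (real_complex R) A^T.
Proof. by apply/matrixP => i j; rewrite !mxE conjc_real. Qed.

Lemma dagger_delta m n (i : 'I_m) (j : 'I_n) : dagger (delta_mx i j : 'M[C]_(m, n)) = delta_mx j i.
Proof. by rewrite /dagger map_delta_mx trmx_delta. Qed.

Lemma singular_values_xcorr (k d s e : R) :
  0 <= s -> 0 <= e -> s ^+ 2 = 2 * k ^+ 2 -> e ^+ 2 = d ^+ 2 ->
  singular_values_are (map_mx (real_complex R) (xcorr k d)) [:: s; s; e].
Proof.
move=> s_ge0 e_ge0 sE eE; split => //=; first by rewrite s_ge0 e_ge0.
rewrite dagger_real -map_mxM xcorr_gram map_diag_mx char_poly_trig ?diag_mx_is_trig //.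
by rewrite !big_ord_recl big_ord0 !big_cons big_nil !mxE /= !mulr1n sE eE.
Qed.

End PauliCorrelations.

Section PiEighth.
Variable R : realType.

Lemma sqr_sqrt2_half : (Num.sqrt 2 / 2 : R) ^+ 2 = 1 / 2.
Proof. by rewrite expr_div_n sqr_sqrtr ?ler0n //; field. Qed.

Lemma sqrt2_half_ge0 : (0 : R) <= Num.sqrt 2 / 2.
Proof. by rewrite divr_ge0 ?sqrtr_ge0. Qed.

Lemma cos_pi4 : cos (pi / 4 : R) = Num.sqrt 2 / 2.
Proof.
have pi_gt0 : (0 : R) < pi := pi_gt0 R.
have cos_gt0 : 0 < cos (pi / 4 : R) by apply: cos_gt0_pihalf; lra.
have : cos ((pi / 4) *+ 2) = 0 :> R by rewrite (_ : _ *+ 2 = pi / 2) ?cos_pihalf //; field.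
rewrite cos_mulr2n mulr2n => cos2.
apply/eqP; rewrite -(@eqrXn2 _ 2) ?sqrt2_half_ge0 ?(ltW cos_gt0) //.
by rewrite sqr_sqrt2_half; apply/eqP; lra.
Qed.

Lemma sin_pi4 : sin (pi / 4 : R) = Num.sqrt 2 / 2.
Proof.
have pi_gt0 : (0 : R) < pi := pi_gt0 R.
have sin_gt0 : 0 < sin (pi / 4 : R) by apply: sin_gt0_pihalf; lra.
apply/eqP; rewrite -(@eqrXn2 _ 2) ?sqrt2_half_ge0 ?(ltW sin_gt0) //.
by rewrite sin2cos2 cos_pi4 sqr_sqrt2_half; apply/eqP; field.
Qed.

Lemma pi8_double : (pi / 8 : R) *+ 2 = pi / 4.
Proof. by rewrite mulr2n; field. Qed.

Lemma cos_pi8_sqr : cos (pi / 8 : R) ^+ 2 = (2 + Num.sqrt 2) / 4.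
Proof.
have := cos_mulr2n (pi / 8 : R); rewrite pi8_double cos_pi4.
rewrite [cos _ ^+ 2 *+ 2]mulr2n => h; lra.
Qed.

Lemma sin_pi8_sqr : sin (pi / 8 : R) ^+ 2 = (2 - Num.sqrt 2) / 4.
Proof. by rewrite sin2cos2 cos_pi8_sqr; field. Qed.

Lemma cos_sin_pi8 : cos (pi / 8 : R) * sin (pi / 8) = Num.sqrt 2 / 4.
Proof.
have := sin_mulr2n (pi / 8 : R).
by rewrite pi8_double sin_pi4 [_ *+ 2 in RHS]mulr2n => h; lra.
Qed.

End PiEighth.

Section FilteredState.
Local Open Scope complex_scope.
Variable R : realType.
Local Notation C := (R[i]).

Definition filt_row (x : R) : 'rV[R]_2 := \row_(i < 2) if i == 0 then x else 1.

Lemma filtE (x : R) : filt x = diag_mx (map_mx (real_complex R) (filt_row x)).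
Proof. by apply/matrixP => i j; rewrite !mxE; case: (i == 0). Qed.

Definition filt3_row (x y z : R) : 'rV[R]_(2 * (2 * 2)) :=
  filt_row x *t (filt_row y *t filt_row z).

Lemma filt3E (x y z : R) :
  filt x *t (filt y *t filt z) = diag_mx (map_mx (real_complex R) (filt3_row x y z)).
Proof.
rewrite !filtE !tens_diag_mx; congr diag_mx.
by apply/matrixP => i j; rewrite !mxE /= !rmorphM.
Qed.

Definition ket3_index (a b c : 'I_2) : 'I_(2 * (2 * 2)) := mxtens_index (a, mxtens_index (b, c)).

Lemma ket3E (K : pzRingType) (a b c : 'I_2) :
  delta_mx a (0 : 'I_1) *t (delta_mx b (0 : 'I_1) *t delta_mx c (0 : 'I_1))
  = delta_mx (ket3_index a b c) 0 :> 'cV[K]_(2 * (2 * 2)).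
Proof. by rewrite !tens_delta_mx; congr delta_mx; apply: val_inj. Qed.

Local Notation i000 := (ket3_index 0 0 0).
Local Notation i001 := (ket3_index 0 0 1).
Local Notation i111 := (ket3_index 1 1 1).

Definition psi_real : 'cV[R]_(2 * (2 * 2)) :=
  cos (pi / 8) *: delta_mx i000 0 + sin (pi / 8) *: delta_mx i111 0.

Lemma psi_sE : psi_s R = map_mx (real_complex R) psi_real.
Proof. by rewrite /psi_s /ket0 /ket1 !ket3E map_mxD !map_mxZ !map_delta_mx. Qed.

Definition rho_chi_real (p : R) : 'M[R]_(2 * (2 * 2)) :=
  p *: (psi_real *m psi_real^T) + (1 - p) / 2 *: (delta_mx i000 i000 + delta_mx i001 i001).

Lemma rho_chiE (p : R) : rho_chi p = map_mx (real_complex R) (rho_chi_real p).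
Proof.
rewrite /rho_chi psi_sE dagger_real -map_mxM /rho_chi_real map_mxD !map_mxZ; congr (_ + _).
rewrite /ket0 tens_delta_mx dagger_delta mul_delta_mx mx1_sum_delta !big_ord_recl big_ord0 addr0.
rewrite tensmxZr tensmxDr !tens_delta_mx map_mxD !map_delta_mx scalerA rmorphM fmorphV rmorph_nat.
by congr (_ *: (delta_mx _ _ + delta_mx _ _)); apply: val_inj.
Qed.

Lemma rho_fE (p x y z : R) :
  rho_f p x y z = map_mx (real_complex R) ((Nf p x y z)^-1 *:
    (diag_mx (filt3_row x y z) *m rho_chi_real p *m diag_mx (filt3_row x y z))).
Proof.
by rewrite /rho_f /= filt3E -map_diag_mx rho_chiE dagger_real tr_diag_mx -!map_mxM map_mxZ.
Qed.

Lemma rho_chi_real_units (p : R) (c := cos (pi / 8)) (s := sin (pi / 8)) :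
  rho_chi_real p =
    (p * c ^+ 2 + (1 - p) / 2) *: delta_mx i000 i000 + (1 - p) / 2 *: delta_mx i001 i001
    + p * c * s *: (delta_mx i000 i111 + delta_mx i111 i000) + p * s ^+ 2 *: delta_mx i111 i111.
Proof.
rewrite /rho_chi_real /psi_real linearD /= !linearZ /= !trmx_delta.
rewrite !mulmxDl !mulmxDr -!scalemxAl -!scalemxAr !mul_delta_mx.
by apply/matrixP => r t; rewrite !mxE -/c -/s; ring.
Qed.

Section FilteredExpectation.
Variables (n : nat) (d : 'rV[R]_n) (O : 'M[C]_n).

Definition filter_expect (X : 'M[R]_n) : C :=
  \tr (map_mx (real_complex R) (diag_mx d *m X *m diag_mx d) *m O).

Lemma filter_expectD X Y : filter_expect (X + Y) = filter_expect X + filter_expect Y.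
Proof. by rewrite /filter_expect mulmxDr mulmxDl map_mxD mulmxDl mxtraceD. Qed.

Lemma filter_expectZ a X : filter_expect (a *: X) = a%:C * filter_expect X.
Proof. by rewrite /filter_expect -scalemxAr -scalemxAl map_mxZ -scalemxAl mxtraceZ. Qed.

Lemma filter_expect_delta i j : filter_expect (delta_mx i j) = (d 0 i * d 0 j)%:C * O j i.
Proof.
rewrite /filter_expect diag_delta_diag map_mxZ map_delta_mx -scalemxAl.
by rewrite mxtraceZ mxtrace_delta_mul.
Qed.

End FilteredExpectation.

Lemma trace_rho_f_tens (p x y z : R) (A B D : 'M[C]_2)
    (c := cos (pi / 8)) (s := sin (pi / 8)) :
  \tr (rho_f p x y z *m (A *t (B *t D))) = ((Nf p x y z)^-1)%:C * (
       ((p * c ^+ 2 + (1 - p) / 2) * (x * y * z) ^+ 2)%:C * (A 0 0 * (B 0 0 * D 0 0))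
     + ((1 - p) / 2 * (x * y) ^+ 2)%:C * (A 0 0 * (B 0 0 * D 1 1))
     + (p * c * s * (x * y * z))%:C * (A 1 0 * (B 1 0 * D 1 0) + A 0 1 * (B 0 1 * D 0 1))
     + (p * s ^+ 2)%:C * (A 1 1 * (B 1 1 * D 1 1))).
Proof.
rewrite rho_fE map_mxZ -scalemxAl mxtraceZ -/(filter_expect _ _ _) rho_chi_real_units.
rewrite !(filter_expectD, filter_expectZ, filter_expect_delta).
rewrite /ket3_index !tensmxE !(row_tensE, mxtens_indexK) !mxE /=.
by rewrite !(rmorphM, rmorphXn, rmorphD, rmorphN, rmorph1); ring.
Qed.

Lemma mul_ii : 'i * 'i = -1 :> C.
Proof. by rewrite -expr2 sqr_i. Qed.

Lemma corr_rho_f (p x y z : R) (c := cos (pi / 8)) (s := sin (pi / 8)) :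
  corr_mx (rho_f p x y z) = map_mx (real_complex R)
    (xcorr ((Nf p x y z)^-1 * (2 * p * c * s * (x * y * z)))
           ((Nf p x y z)^-1 * ((p * c ^+ 2 + (1 - p) / 2) * (x * y * z) ^+ 2
                               - (1 - p) / 2 * (x * y) ^+ 2 - p * s ^+ 2))).
Proof.
apply/matrixP => j t; case: (mxtens_indexP t) => i k.
rewrite !mxE mxtens_indexK /= trace_rho_f_tens -/c -/s.
(* In [pauli] the entry [- 'i] is elaborated as [- Num.imaginary]; [complexiE] turns
   it back into ['i], so that [ring] sees a single imaginary unit. *)
case: i => [[|[|[|//]]] ?]; case: j => [[|[|[|//]]] ?]; case: k => [[|[|[|//]]] ?];
  rewrite !mxE /= -?complexiE;
  rewrite ?mulr1 ?mul1r ?mulr0 ?mul0r ?mulrN ?mulNr ?opprK ?mul_ii;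
  rewrite !(rmorphM, rmorphXn, rmorphD, rmorphN, rmorph1, rmorph0); ring.
Qed.

End FilteredState.

Section FilteredSvetlichny.
Variable R : realType.
Local Notation sqrt2 := (Num.sqrt (2 : R)).

Lemma sqrt2_bounds : 707 / 500 < sqrt2 <= 2.
Proof.
have s2 : sqrt2 ^+ 2 = 2 by rewrite sqr_sqrtr ?ler0n.
have s0 : 0 <= sqrt2 := sqrtr_ge0 _.
by apply/andP; split; nra.
Qed.

Lemma Nf_gt0 (p x y z : R) : 0 <= p <= 1 -> 0 < x -> 0 < y -> 0 < z -> 0 < Nf p x y z.
Proof.
move=> /andP[p_ge0 p_le1] x_gt0 y_gt0 z_gt0; have /andP[s_gt s_le] := sqrt2_bounds.
have xy_gt0 : 0 < x ^+ 2 * y ^+ 2 by rewrite mulr_gt0 ?exprn_gt0.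
have xyz_gt0 : 0 < x ^+ 2 * y ^+ 2 * z ^+ 2 by rewrite mulr_gt0 ?exprn_gt0.
have t1 : 0 <= (2 - sqrt2) / 4 * p by apply: mulr_ge0 => //; lra.
have t2 : 0 <= (1 - p) / 2 * (x ^+ 2 * y ^+ 2) by apply: mulr_ge0; lra.
have t3 : 0 < (2 + sqrt2 * p) / 4 * (x ^+ 2 * y ^+ 2 * z ^+ 2) by apply: mulr_gt0 => //; nra.
rewrite /Nf; lra.
Qed.

Lemma corr_rho_fE (p x y z : R) :
  corr_mx (rho_f p x y z) = map_mx (real_complex R)
    (xcorr (p * x * y * z / Nf p x y z * (sqrt2 / 2)) (Df p x y z / Nf p x y z)).
Proof.
rewrite corr_rho_f; congr (map_mx _ (xcorr _ _)).
- rewrite (_ : 2 * p * _ * _ = 2 * p * (cos (pi / 8) * sin (pi / 8))); last by ring.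
  by rewrite cos_sin_pi8 mulrC [RHS]mulrAC; congr (_ * _); field.
- by rewrite cos_pi8_sqr sin_pi8_sqr /Df mulrC; congr (_ * _); field.
Qed.

Lemma svet_val_rho_f_le (p x y z : R) (a a' b b' c c' : 'rV[R]_3) :
  0 < Nf p x y z -> `|Df p x y z| < p * x * y * z ->
  unit3 a -> unit3 a' -> unit3 b -> unit3 b' -> unit3 c -> unit3 c' ->
  svet_val (rho_f p x y z) a a' b b' c c' <= 4 * (p * x * y * z / Nf p x y z).
Proof.
move=> N_gt0 D_lt ua ua' ub ub' uc uc'.
set s0 := p * x * y * z / Nf p x y z.
have s0_gt0 : 0 < s0 by rewrite divr_gt0 // (le_lt_trans _ D_lt).
have D_le : (Df p x y z / Nf p x y z) ^+ 2 <= s0 ^+ 2.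
  have : `|Df p x y z / Nf p x y z| <= s0.
    by rewrite normrM [`|_^-1|]gtr0_norm ?invr_gt0 // /s0 ler_pM2r ?invr_gt0 // ltW.
  by rewrite -real_normK ?num_real // => D_s0; rewrite lerXn2r ?nnegrE ?(ltW s0_gt0).
rewrite (svet_val_real_corr _ _ _ _ _ _ (corr_rho_fE _ _ _ _)) -/s0.
apply: svetlichny_bound => //.
- move=> w; apply: sqnorm_xcorr_le => //.
  by rewrite exprMn sqr_sqrt2_half; field.
- by rewrite sqnorm_add_sub [sqnorm b]ub [sqnorm b']ub'; ring.
- by rewrite sqnorm_tens_re_im [sqnorm a]ua [sqnorm a']ua' [sqnorm c]uc [sqnorm c']uc'; ring.
Qed.

Lemma singular_values_rho_f (p x y z : R) :
  0 <= p <= 1 -> 0 < x -> 0 < y -> 0 < z ->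
  singular_values_are (corr_mx (rho_f p x y z))
    [:: p * x * y * z / Nf p x y z; p * x * y * z / Nf p x y z; `|Df p x y z| / Nf p x y z].
Proof.
move=> p01 x_gt0 y_gt0 z_gt0; have N_gt0 := Nf_gt0 p01 x_gt0 y_gt0 z_gt0.
have [p_ge0 _] := andP p01.
have pxyz_ge0 : 0 <= p * x * y * z by rewrite !mulr_ge0 // ltW.
rewrite corr_rho_fE; apply: singular_values_xcorr.
- by rewrite divr_ge0 // ltW.
- by rewrite divr_ge0 // ltW.
- by rewrite [in RHS]exprMn sqr_sqrt2_half; field; rewrite gt_eqF.
- by rewrite !expr_div_n real_normK ?num_real.
Qed.

Definition vec3 (u v w : R) : 'rV[R]_3 := \row_(k < 3) [:: u; v; w]`_k.

Lemma unit3_vec3 (u v w : R) : u ^+ 2 + v ^+ 2 + w ^+ 2 = 1 -> unit3 (vec3 u v w).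
Proof. by rewrite /unit3 !big_ord_recl big_ord0 !mxE /= addr0 addrA. Qed.

Section Witness.
Let h := sqrt2 / 2.
Let e1 := vec3 1 0 0.
Let e2 := vec3 0 1 0.

Lemma svet_witness_unit :
  [/\ unit3 e1, unit3 e2, unit3 (vec3 h (- h) 0) & unit3 (vec3 h h 0)].
Proof. by split; apply: unit3_vec3; rewrite ?sqrrN ?sqr_sqrt2_half; field. Qed.

Lemma svet_val_rho_f_witness (p x y z : R) :
  svet_val (rho_f p x y z) e1 e2 e1 e2 (vec3 h (- h) 0) (vec3 h h 0)
  = 4 * `|p * x * y * z / Nf p x y z|.
Proof.
rewrite (svet_val_real_corr _ _ _ _ _ _ (corr_rho_fE _ _ _ _)) -/h.
rewrite /dotr !big_ord_recl !big_ord0 !mxE !big_ord_recl !big_ord0 !mxE /=.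
set s0 := p * x * y * z / Nf p x y z.
transitivity `|4 * s0 * (2 * h ^+ 2)|; first by congr `|_|; ring.
rewrite sqr_sqrt2_half (_ : 2 * (1 / 2) = 1) ?mulr1; last by field.
by rewrite normrM ger0_norm.
Qed.

Lemma is_max_svet_rho_f (p x y z : R) :
  0 <= p <= 1 -> 0 < x -> 0 < y -> 0 < z -> `|Df p x y z| < p * x * y * z ->
  is_max_svet (rho_f p x y z) (4 * (p * x * y * z) / Nf p x y z).
Proof.
move=> p01 x_gt0 y_gt0 z_gt0 D_lt; have N_gt0 := Nf_gt0 p01 x_gt0 y_gt0 z_gt0.
have pxyz_gt0 : 0 < p * x * y * z := le_lt_trans (normr_ge0 _) D_lt.
have [u1 u2 u3 u4] := svet_witness_unit.
rewrite -mulrA; split=> [a a' b b' c c'|]; first exact: svet_val_rho_f_le.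
exists e1, e2, e1, e2, (vec3 h (- h) 0), (vec3 h h 0); split; first by do !split.
by rewrite svet_val_rho_f_witness ger0_norm // divr_ge0 // ltW.
Qed.

Lemma violates_svet_rho_f (p x y z : R) :
  0 <= p <= 1 -> 0 < x -> 0 < y -> 0 < z -> Nf p x y z < p * x * y * z ->
  violates_svet (rho_f p x y z).
Proof.
move=> p01 x_gt0 y_gt0 z_gt0 N_lt; have N_gt0 := Nf_gt0 p01 x_gt0 y_gt0 z_gt0.
have [u1 u2 u3 u4] := svet_witness_unit.
exists e1, e2, e1, e2, (vec3 h (- h) 0), (vec3 h h 0); split; first by do !split.
have pxyz_gt0 : 0 < p * x * y * z := lt_trans N_gt0 N_lt.
rewrite svet_val_rho_f_witness ger0_norm ?divr_ge0 // ?ltW //.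
by rewrite ltr_pMr ?ltr0n // ltr_pdivlMr // (mul1r (Nf _ _ _ _)).
Qed.

End Witness.

(* For fixed [x] and [y], this [z] maximises [p x y z - Nf p x y z]. *)
Lemma filter_gain (p x y : R) (z := 2 * p / ((2 + sqrt2 * p) * (x * y))) :
  0 <= p -> 0 < x -> 0 < y ->
  p * x * y * z - Nf p x y z
  = p ^+ 2 / (2 + sqrt2 * p) - (2 - sqrt2) / 4 * p - (1 - p) / 2 * (x * y) ^+ 2.
Proof.
move=> p_ge0 x_gt0 y_gt0; have /andP[s_gt _] := sqrt2_bounds.
have w_gt0 : 0 < 2 + sqrt2 * p by nra.
rewrite /Nf.
have -> : p * x * y * z = 2 * p ^+ 2 / (2 + sqrt2 * p).
  by rewrite /z; field; rewrite !gt_eqF.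
have -> : x ^+ 2 * y ^+ 2 * z ^+ 2 = 4 * p ^+ 2 / (2 + sqrt2 * p) ^+ 2.
  by rewrite /z; field; rewrite !gt_eqF.
by rewrite exprMn; field; rewrite gt_eqF.
Qed.

Lemma sqrt2_margin (p : R) : 3697 / 10000 <= p <= 1 ->
  1 / 10000 <= (3 - sqrt2) * p - (2 - sqrt2).
Proof.
move=> /andP[p_ge p_le1]; have /andP[s_gt _] := sqrt2_bounds.
have -> : (3 - sqrt2) * p - (2 - sqrt2)
    = (sqrt2 - 707 / 500) * (1 - p) + ((3 - 707 / 500) * p - (2 - 707 / 500)) by ring.
have : 0 <= (sqrt2 - 707 / 500) * (1 - p) by apply: mulr_ge0; lra.
lra.
Qed.

Lemma filter_gain_gt0 (p : R) : 3697 / 10000 <= p <= 1 ->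
  0 < p ^+ 2 / (2 + sqrt2 * p) - (2 - sqrt2) / 4 * p - (1 - p) / 2 * (1 / 50 * (1 / 50)) ^+ 2.
Proof.
move=> p_range; have margin := sqrt2_margin p_range; have [p_ge p_le1] := andP p_range.
have gain : 3697 / 10000 * (1 / 10000) <= p * ((3 - sqrt2) * p - (2 - sqrt2)).
  by apply: ler_pM; rewrite ?divr_ge0 ?ler0n.
have p_ge0 : 0 <= p := le_trans (divr_ge0 (ler0n _ _) (ler0n _ _)) p_ge.
clear p_range margin p_ge.
have /andP[_ s_le] := sqrt2_bounds; have s_ge0 : 0 <= sqrt2 := sqrtr_ge0 _.
have s2 : sqrt2 ^+ 2 = 2 by rewrite sqr_sqrtr ?ler0n.
set w := 2 + sqrt2 * p; set e := (1 / 50 * (1 / 50)) ^+ 2.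
have w_gt0 : 0 < w by rewrite /w ltr_wpDr ?mulr_ge0 ?ltr0n.
have e_ge0 : 0 <= e by apply: sqr_ge0.
have loss : (1 - p) * w <= 1 * 4.
  apply: ler_pM; [by rewrite subr_ge0 | exact: ltW | by rewrite gerBl |].
  clear gain; have := ler_pM s_ge0 p_ge0 s_le p_le1.
  by rewrite /w mulr1; lra.
have -> : p ^+ 2 / w - (2 - sqrt2) / 4 * p - (1 - p) / 2 * e
    = (4 * p ^+ 2 - (2 - sqrt2) * p * w - 2 * (1 - p) * e * w) / (4 * w).
  by field; rewrite gt_eqF.
apply: divr_gt0; last by rewrite mulr_gt0.
have -> : 4 * p ^+ 2 - (2 - sqrt2) * p * w - 2 * (1 - p) * e * w
    = 2 * (p * ((3 - sqrt2) * p - (2 - sqrt2))) + (sqrt2 ^+ 2 - 2) * p ^+ 2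
      - 2 * e * ((1 - p) * w) by rewrite /w; ring.
rewrite s2 subrr mul0r addr0.
have := ler_wpM2l e_ge0 loss; rewrite /e.
lra.
Qed.

End FilteredSvetlichny.

Theorem mainTheorem3 (R : realType) :
  (forall p x y z : R, 0 <= p <= 1 -> 0 < x -> 0 < y -> 0 < z ->
     singular_values_are (corr_mx (rho_f p x y z))
       [:: p * x * y * z / Nf p x y z; p * x * y * z / Nf p x y z;
           `|Df p x y z| / Nf p x y z]
     /\ (`|Df p x y z| < p * x * y * z ->
           is_max_svet (rho_f p x y z) (4 * (p * x * y * z) / Nf p x y z)))
  /\
  (forall p : R, 3697%:R / 10000%:R <= p <= 1 ->
     exists x y z : R, [/\ 0 < x, 0 < y, 0 < z & violates_svet (rho_f p x y z)]).
Proof.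
split=> [p x y z p01 x_gt0 y_gt0 z_gt0 | p p_range].
  split=> [|D_lt]; first exact: singular_values_rho_f.
  exact: is_max_svet_rho_f.
have [p_ge p_le1] := andP p_range.
have p_gt0 : 0 < p by apply: lt_le_trans p_ge; rewrite divr_gt0 ?ltr0n.
have p01 : 0 <= p <= 1 by rewrite (ltW p_gt0) p_le1.
have x_gt0 : (0 : R) < 1 / 50 by rewrite divr_gt0 ?ltr0n.
set z := 2 * p / ((2 + Num.sqrt 2 * p) * (1 / 50 * (1 / 50))).
have z_gt0 : 0 < z.
  by rewrite divr_gt0 ?mulr_gt0 ?ltr_wpDr ?mulr_ge0 ?sqrtr_ge0 ?ltW ?ltr0n.
exists (1 / 50), (1 / 50), z; split => //; apply: violates_svet_rho_f => //.
by rewrite -subr_gt0 filter_gain ?(ltW p_gt0) // filter_gain_gt0.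
Qed.
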